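(* In the Karma DPG (with the pay-bid-to-society karma transition), the immediate reward $r[x,a](\mu,\pi)$ and the state transition probability $p[x^+\mid x,a](\mu,\pi)$ are Lipschitz continuous in $s=(\mu,\pi)$ on $\mathcal{M}\times\Pi$. That is, there exist constants $L_r,L_p>0$ such that for all $s,s'\in\mathcal{M}\times\Pi$, $$\sup_{x\in\mathcal{X},\,a\in\mathcal{A}[x]}|r[x,a](s)-r[x,a](s')|\le L_r\|s-s'\|,\qquad \sup_{x,x^+\in\mathcal{X},\,a\in\mathcal{A}[x]}|p[x^+\mid x,a](s)-p[x^+\mid x,a](s')|\le L_p\|s-s'\|.$$
   Context: Karma DPG. Let $\mathcal{U}\subset\mathbb{R}_{>0}$ be a finite set of urgency levels and $K\in\mathbb{N}$. The state space is $\mathcal{X}=\mathcal{U}\times\{0,\dots,K\}$, states written $x=(u,k)$. In state $(u,k)$ the action set is $\mathcal{A}[k]=\{0,1,\dots,k\}$ (bids). $\mathcal{M}=\Delta(\mathcal{X})$ is the set of probability distributions on $\mathcal{X}$ and $\Pi$ is the set of stationary policies $\pi$, i.e. $\pi[\cdot\mid x]\in\Delta(\mathcal{A}[x])$ for every $x$; $\mathcal{M}\times\Pi$ is viewed as a compact subset of a finite-dimensional real vector space equipped with a fixed norm $\|\cdot\|$ (e.g. the sup norm of the concatenated vector). Let $\phi[u^+\mid u]$ be a fixed Markov kernel on $\mathcal{U}$. For bids $a,a'$ let $\mathbb{P}[\texttt{win}\mid a,a']=1$ if $a>a'$, $0$ if $a<a'$, $1/2$ if $a=a'$. Define $\gamma[\texttt{win}\mid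 a](\mu,\pi)=\sum_{(u',k')\in\mathcal{X}}\sum_{a'\in\mathcal{A}[k']}\mu[u',k']\,\pi[a'\mid u',k']\,\mathbb{P}[\texttt{win}\mid a,a']$ and $\gamma[\texttt{lose}\mid a]=1-\gamma[\texttt{win}\mid a]$. Reward: $r[(u,k),a](\mu,\pi)=u\,\gamma[\texttt{win}\mid a](\mu,\pi)$. Pay-bid-to-society karma transition: let $\bar p(\mu,\pi)=\sum_{(u,k)}\mu[u,k]\sum_{a}\pi[a\mid u,k]\,\gamma[\texttt{win}\mid a](\mu,\pi)\,a$, $f^{\text{low}}=\lceil\bar p\rceil-\bar p$, $f^{\text{high}}=1-f^{\text{low}}$. Set $\kappa[k^+\mid k,a,\texttt{win}]=f^{\text{low}}\mathbf 1[k^+=k-a+\lfloor\bar p\rfloor]+f^{\text{high}}\mathbf 1[k^+=k-a+\lceil\bar p\rceil]$, $\kappa[k^+\mid k,a,\texttt{lose}]=f^{\text{low}}\mathbf 1[k^+=k+\lfloor\bar p\rfloor]+f^{\text{high}}\mathbf 1[k^+=k+\lceil\bar p\rceil]$, and $\kappa[k^+\mid k,a](\mu,\pi)=\sum_{o\in\{\texttt{win},\texttt{lose}\}}\gamma[o\mid a](\mu,\pi)\,\kappa[k^+\mid k,a,o](\mu,\pi)$. Transition: $p[(u^+,k^+)\mid (u,k),a](\mu,\pi)=\phi[u^+\mid u]\,\kappa[k^+\mid k,a](\mu,\pi)$. *)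

From mathcomp Require Import all_boot all_order all_algebra.
From mathcomp Require Import reals.
Set Implicit Arguments. Unset Strict Implicit. Unset Printing Implicit Defensive.
Import Order.TTheory GRing.Theory Num.Theory.
Local Open Scope ring_scope.

Section KarmaDPG.
Variables (R : realType) (U : finType) (K : nat).

(* state x = (u, k), k in {0,...,K} *)
Definition state := (U * 'I_K.+1)%type.

Definition is_dist (mu : state -> R) : Prop :=
  (forall x, 0 <= mu x) /\ \sum_x mu x = 1.

(* stationary policies: pi x a = pi[a | x]; bids a : 'I_K.+1 with a <= k
   form A[k] = {0,...,k}; entries outside A[k] are forced to be 0 *)
Definition is_policy (pi : state -> 'I_K.+1 -> R) : Prop :=
  forall x : state, (forall a, 0 <= pi x a) /\ (forall a : 'I_K.+1, (x.2 < a)%N -> pi x a = 0)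
            /\ \sum_(a < K.+1 | (a <= x.2)%N) pi x a = 1.

Definition sdist (mu : state -> R) (pi : state -> 'I_K.+1 -> R)
                 (mu' : state -> R) (pi' : state -> 'I_K.+1 -> R) : R :=
  Num.max (\big[Num.max/0]_x `|mu x - mu' x|)
          (\big[Num.max/0]_(x : state) \big[Num.max/0]_(a < K.+1 | (a <= x.2)%N) `|pi x a - pi' x a|).

Definition winP (a a' : nat) : R :=
  if (a' < a)%N then 1 else if (a < a')%N then 0 else 2^-1.

Definition gamma_win (mu : state -> R) (pi : state -> 'I_K.+1 -> R) (a : nat) : R :=
  \sum_(x' : state) \sum_(a' < K.+1 | (a' <= x'.2)%N) mu x' * pi x' a' * winP a a'.

Definition gamma_lose mu pi a : R := 1 - gamma_win mu pi a.

Definition reward (urg : U -> R) mu pi (x : state) (a : nat) : R :=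
  urg x.1 * gamma_win mu pi a.

Definition pbar (mu : state -> R) (pi : state -> 'I_K.+1 -> R) : R :=
  \sum_(x : state) mu x * \sum_(a < K.+1 | (a <= x.2)%N) pi x a * gamma_win mu pi a * (a : nat)%:R.

Definition f_low mu pi : R := (Num.ceil (pbar mu pi))%:~R - pbar mu pi.
Definition f_high mu pi : R := 1 - f_low mu pi.

Definition kappa_win mu pi (kp k a : nat) : R :=
  f_low mu pi * (kp%:Z == k%:Z - a%:Z + Num.floor (pbar mu pi))%:R
  + f_high mu pi * (kp%:Z == k%:Z - a%:Z + Num.ceil (pbar mu pi))%:R.

Definition kappa_lose mu pi (kp k : nat) : R :=
  f_low mu pi * (kp%:Z == k%:Z + Num.floor (pbar mu pi))%:R
  + f_high mu pi * (kp%:Z == k%:Z + Num.ceil (pbar mu pi))%:R.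

Definition kappa mu pi (kp k a : nat) : R :=
  gamma_win mu pi a * kappa_win mu pi kp k a + gamma_lose mu pi a * kappa_lose mu pi kp k.

(* p[(u+,k+) | (u,k), a](mu,pi) = phi[u+|u] kappa[k+|k,a](mu,pi); phi u u+ = phi[u+|u] *)
Definition trans (phi : U -> U -> R) mu pi (xp x : state) (a : nat) : R :=
  phi x.1 xp.1 * kappa mu pi xp.2 x.2 a.

End KarmaDPG.

(* The reward and the karma transition are built from [mu] and [pi] by sums
   and products, and on the compact set of distributions and policies every
   coordinate is bounded by 1 and 1-Lipschitz for the sup norm; sums and
   products of bounded Lipschitz maps are bounded Lipschitz.  The only
   non-polynomial ingredient is the split of the average payment [pbar]
   between [floor pbar] and [ceil pbar]: the resulting probability of landing
   on the integer [m] is exactly [tent (m - pbar)] with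
   [tent t = max(0, 1 - |t|)], so the jumps of floor and ceil cancel and the
   dependence on [pbar] is 1-Lipschitz.  Finitely many states and bids then
   give uniform constants. *)

From mathcomp Require Import all_boot all_order all_algebra.
From mathcomp Require Import reals.
From mathcomp Require Import zify ring lra.
Set Implicit Arguments.
Unset Strict Implicit.
Unset Printing Implicit Defensive.

Import Order.TTheory GRing.Theory Num.Theory.
Local Open Scope ring_scope.

Section Tent.
Variable R : realType.
Implicit Types (s t p : R) (m n : int).

Definition tent t : R := Num.max 0 (1 - `|t|).

Lemma tent_ge0 t : 0 <= tent t.
Proof. by rewrite le_max lexx. Qed.

Lemma tent_le1 t : tent t <= 1.
Proof. by rewrite ge_max ler01 /=; have := normr_ge0 t; lra. Qed.

Lemma tent_out t : 1 <= `|t| -> tent t = 0.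
Proof. by move=> ht; rewrite /tent max_l // subr_le0. Qed.

Lemma tent_in t : `|t| <= 1 -> tent t = 1 - `|t|.
Proof. by move=> ht; rewrite /tent max_r // subr_ge0. Qed.

Lemma tent_lipschitz s t : `|tent s - tent t| <= `|s - t|.
Proof.
apply: le_trans (ler_dist_dist s t).
have [st|st] := lerP 0 (`|s| - `|t|); [rewrite (ger0_norm st)|rewrite (ltr0_norm st)];
  rewrite /tent !maxEle; case: ifP => hs; case: ifP => ht;
  rewrite ler_norml; apply/andP; split; lra.
Qed.

Lemma tent_interpolation n m p : n%:~R <= p <= n%:~R + 1 ->
  tent (m%:~R - p) = (n%:~R + 1 - p) * (m == n)%:R + (p - n%:~R) * (m == n + 1)%:R.
Proof.
move=> /andP[lenp lepn1].
have le_int m1 m2 : (m1 <= m2)%R -> m1%:~R <= m2%:~R :> R by rewrite ler_int.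
case: (ltgtP m n) => [ltmn | ltnm | ->].
- have : (m + 1)%:~R <= n%:~R :> R by apply: le_int; lia.
  rewrite intrD => lemn; have -> : (m == n + 1) = false by apply/eqP; lia.
  by rewrite mulr0 mulr0 addr0 tent_out // ler0_norm; lra.
- have [->|nen1] := eqVneq m (n + 1).
    by rewrite intrD mulr0 add0r mulr1 tent_in ger0_norm; lra.
  have : (n + 2)%:~R <= m%:~R :> R by apply: le_int; lia.
  rewrite intrD mulr0 mulr0 addr0 => lenm.
  by rewrite tent_out // ger0_norm; lra.
- have -> : (n == n + 1) = false by apply/eqP; lia.
  by rewrite mulr1 mulr0 addr0 tent_in ler0_norm; lra.
Qed.

Lemma split_mass_tent p (c m : int) :
  ((Num.ceil p)%:~R - p) * (m == c + Num.floor p)%:R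
  + (1 - ((Num.ceil p)%:~R - p)) * (m == c + Num.ceil p)%:R
  = tent ((m - c)%:~R - p).
Proof.
have shift z : (m == c + z) = (m - c == z) by rewrite subr_eq addrC.
have /andP[lefp ltpf1] := floor_itv p; rewrite intrD in ltpf1.
rewrite !shift (@tent_interpolation (Num.floor p)); last by rewrite lefp ltW.
rewrite ceil_floor; case: (boolP (p \is a Num.int)) => [pint|_] /=.
  by rewrite addr0 (floorK pint); ring.
by rewrite intrD; congr (_ * _ + _ * _); ring.
Qed.

End Tent.

Section BoundedLipschitz.
Variables (R : realType) (U : finType) (K : nat).

Local Notation dist := (state U K -> R).
Local Notation policy := (state U K -> 'I_K.+1 -> R).
Local Notation functional := (dist -> policy -> R).
Implicit Types (mu : dist) (pi : policy) (x : state U K) (F G : functional).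

Definition lipschitz (F : functional) (L : R) :=
  forall mu pi mu' pi', is_dist mu -> is_policy pi -> is_dist mu' -> is_policy pi' ->
    `|F mu pi - F mu' pi'| <= L * sdist mu pi mu' pi'.

Record bounded_lipschitz (F : functional) (L B : R) : Prop := BoundedLipschitz {
  bounded_lipschitz_bound : forall mu pi, is_dist mu -> is_policy pi -> `|F mu pi| <= B;
  bounded_lipschitz_lip : lipschitz F L }.

Definition blip (F : functional) := exists L B, bounded_lipschitz F L B.

Lemma sdist_ge0 mu pi (mu' : dist) (pi' : policy) : 0 <= sdist mu pi mu' pi'.
Proof. by rewrite /sdist le_max bigmax_ge_id. Qed.

Lemma le_sdist_mu mu pi (mu' : dist) (pi' : policy) x : `|mu x - mu' x| <= sdist mu pi mu' pi'.
Proof. by rewrite /sdist le_max (le_bigmax_cond _ (P := xpredT)). Qed.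

Lemma le_sdist_pi mu pi (mu' : dist) (pi' : policy) x (a : 'I_K.+1) : (a <= x.2)%N ->
  `|pi x a - pi' x a| <= sdist mu pi mu' pi'.
Proof.
move=> ax; rewrite /sdist le_max; apply/orP; right.
by apply: (bigmax_sup x) => //; apply: le_bigmax_cond.
Qed.

Lemma lipschitz_le F L L' : lipschitz F L -> L <= L' -> lipschitz F L'.
Proof.
move=> FL leLL' mu pi mu' pi' *; apply: le_trans (FL _ _ _ _ _ _ _ _) _ => //.
by rewrite ler_wpM2r ?sdist_ge0.
Qed.

Lemma eq_blip F G : (forall mu pi, F mu pi = G mu pi) -> blip F -> blip G.
Proof.
move=> eFG [L [B [FB FL]]]; exists L, B; split=> [mu pi|mu pi mu' pi'].
  by rewrite -eFG; apply: FB.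
by rewrite -!eFG; apply: FL.
Qed.

Lemma blip_const c : blip (fun _ _ => c).
Proof. by exists 0, `|c|; split=> // mu pi mu' pi' *; rewrite subrr normr0 mul0r. Qed.

Lemma blip_mu x : blip (fun mu _ => mu x).
Proof.
exists 1, 1; split=> [mu pi [mu_ge0 mu_sum1] _|mu pi mu' pi' *].
  rewrite ger0_norm // -mu_sum1 (bigD1 x) //= lerDl.
  by apply: sumr_ge0 => y _; apply: mu_ge0.
by rewrite mul1r le_sdist_mu.
Qed.

Lemma blip_pi x (a : 'I_K.+1) : blip (fun _ pi => pi x a).
Proof.
exists 1, 1; split=> [mu pi _ pol|mu pi mu' pi' _ pol _ pol'].
  have [pi_ge0 [pi_out pi_sum1]] := pol x.
  rewrite ger0_norm //; case: (leqP a x.2) => ax; last by rewrite pi_out.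
  rewrite -pi_sum1 (bigD1 a) //= lerDl.
  by apply: sumr_ge0 => b _; apply: pi_ge0.
rewrite mul1r; case: (leqP a x.2) => ax; first exact: le_sdist_pi.
have [_ [pi_out _]] := pol x; have [_ [pi'_out _]] := pol' x.
by rewrite pi_out // pi'_out // subrr normr0 sdist_ge0.
Qed.

Lemma blipD F G : blip F -> blip G -> blip (fun mu pi => F mu pi + G mu pi).
Proof.
move=> [L1 [B1 [FB FL]]] [L2 [B2 [GB GL]]].
exists (L1 + L2), (B1 + B2); split=> [mu pi *|mu pi mu' pi' *].
  by apply: le_trans (ler_normD _ _) _; apply: lerD; [apply: FB|apply: GB].
rewrite opprD addrACA mulrDl; apply: le_trans (ler_normD _ _) _.
by apply: lerD; [apply: FL|apply: GL].
Qed.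

Lemma blipM F G : blip F -> blip G -> blip (fun mu pi => F mu pi * G mu pi).
Proof.
move=> [L1 [B1 [FB FL]]] [L2 [B2 [GB GL]]].
exists (L1 * B2 + B1 * L2), (B1 * B2); split=> [mu pi *|mu pi mu' pi' *].
  by rewrite normrM; apply: ler_pM => //; [apply: FB|apply: GB].
have -> : F mu pi * G mu pi - F mu' pi' * G mu' pi' =
  (F mu pi - F mu' pi') * G mu pi + F mu' pi' * (G mu pi - G mu' pi') by ring.
have -> : (L1 * B2 + B1 * L2) * sdist mu pi mu' pi' =
  L1 * sdist mu pi mu' pi' * B2 + B1 * (L2 * sdist mu pi mu' pi') by ring.
apply: le_trans (ler_normD _ _) _; rewrite !normrM.
by apply: lerD; apply: ler_pM => //; [apply: FL|apply: GB|apply: FB|apply: GL].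
Qed.

Lemma blipB F G : blip F -> blip G -> blip (fun mu pi => F mu pi - G mu pi).
Proof.
move=> bF bG; have := blipD bF (blipM (blip_const (-1)) bG).
by apply: eq_blip => mu pi; rewrite mulN1r.
Qed.

Lemma blip_sum (I : finType) (P : pred I) (F : I -> functional) :
  (forall i, blip (F i)) -> blip (fun mu pi => \sum_(i | P i) F i mu pi).
Proof.
move=> bF; elim: (index_enum I) => [|i s bs].
  by apply: (eq_blip _ (blip_const 0)) => mu pi; rewrite big_nil.
have [Pi|nPi] := boolP (P i).
  by apply: (eq_blip _ (blipD (bF i) bs)) => mu pi; rewrite big_cons Pi.
by apply: (eq_blip _ bs) => mu pi; rewrite big_cons (negbTE nPi).
Qed.

Lemma blip_tent c F : blip F -> blip (fun mu pi => tent (c - F mu pi)).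
Proof.
move=> [L [B [_ FL]]]; exists L, 1; split=> [mu pi *|mu pi mu' pi' *].
  by rewrite ger0_norm ?tent_ge0 ?tent_le1.
apply: le_trans (tent_lipschitz _ _) _.
by rewrite opprB addrC subrKA distrC; apply: FL.
Qed.

Lemma blip_uniform (I : finType) (F : I -> functional) :
  (forall i, blip (F i)) -> exists2 L, 0 < L & forall i, lipschitz (F i) L.
Proof.
move=> /fin_all_exists [L /fin_all_exists [B FLB]].
exists (\sum_i `|L i| + 1); first by rewrite ltr_wpDl ?sumr_ge0.
move=> i; apply: lipschitz_le (bounded_lipschitz_lip (FLB i)) _.
rewrite (bigD1 i) //= -addrA; apply: le_trans (ler_norm _) _.
by rewrite lerDl addr_ge0 ?sumr_ge0.
Qed.

End BoundedLipschitz.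

Arguments blip_const {R U K}.

Section KarmaLipschitz.
Variables (R : realType) (U : finType) (K : nat).
Implicit Types (mu : state U K -> R) (pi : state U K -> 'I_K.+1 -> R).

Lemma blip_gamma_win (a : nat) : blip (fun mu pi => gamma_win mu pi a).
Proof.
apply: blip_sum => x; apply: blip_sum => b.
by apply: blipM; [apply: blipM; [apply: blip_mu|apply: blip_pi]|apply: blip_const].
Qed.

Lemma blip_pbar : blip (@pbar R U K).
Proof.
apply: blip_sum => x; apply: blipM; first exact: blip_mu.
apply: blip_sum => a; apply: blipM; last exact: blip_const.
by apply: blipM; [apply: blip_pi|apply: blip_gamma_win].
Qed.

Lemma kappa_winE mu pi (kp k a : nat) :
  kappa_win mu pi kp k a = tent ((kp%:Z - (k%:Z - a%:Z))%:~R - pbar mu pi).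
Proof. exact: split_mass_tent. Qed.

Lemma kappa_loseE mu pi (kp k : nat) :
  kappa_lose mu pi kp k = tent ((kp%:Z - k%:Z)%:~R - pbar mu pi).
Proof. exact: split_mass_tent. Qed.

Lemma blip_kappa (kp k a : nat) : blip (fun mu pi => kappa mu pi kp k a).
Proof.
have blip_kappa_o (c : int) : blip (fun mu pi => tent ((kp%:Z - c)%:~R - pbar mu pi)).
  exact: blip_tent blip_pbar.
have := blipD (blipM (blip_gamma_win a) (blip_kappa_o (k%:Z - a%:Z)))
              (blipM (blipB (blip_const 1) (blip_gamma_win a)) (blip_kappa_o k)).
by apply: eq_blip => mu pi; rewrite /kappa kappa_winE kappa_loseE.
Qed.

Lemma blip_reward (urg : U -> R) x (a : nat) : blip (fun mu pi => reward urg mu pi x a).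
Proof. exact: blipM (blip_const _) (blip_gamma_win a). Qed.

Lemma blip_trans (phi : U -> U -> R) xp x (a : nat) :
  blip (fun mu pi => trans phi mu pi xp x a).
Proof. exact: blipM (blip_const _) (blip_kappa _ _ _). Qed.

End KarmaLipschitz.

Theorem lemma1 (R : realType) (U : finType) (urg : U -> R)
  (urg_inj : injective urg) (urg_pos : forall u, 0 < urg u)
  (K : nat) (phi : U -> U -> R)
  (phi_ge0 : forall u v, 0 <= phi u v) (phi_sum1 : forall u, \sum_v phi u v = 1) :
  exists Lr Lp : R, 0 < Lr /\ 0 < Lp /\
    forall (mu mu' : state U K -> R) (pi pi' : state U K -> 'I_K.+1 -> R),
      is_dist mu -> is_policy pi -> is_dist mu' -> is_policy pi' ->
      (forall (x : state U K) (a : 'I_K.+1), (a <= x.2)%N ->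
         `|reward urg mu pi x a - reward urg mu' pi' x a| <= Lr * sdist mu pi mu' pi')
      /\
      (forall (x xp : state U K) (a : 'I_K.+1), (a <= x.2)%N ->
         `|trans phi mu pi xp x a - trans phi mu' pi' xp x a| <= Lp * sdist mu pi mu' pi').
Proof.
have [Lr Lr_gt0 reward_lip] := blip_uniform
  (fun i : state U K * 'I_K.+1 => blip_reward urg i.1 i.2).
have [Lp Lp_gt0 trans_lip] := blip_uniform
  (fun i : state U K * state U K * 'I_K.+1 => blip_trans phi i.1.2 i.1.1 i.2).
exists Lr, Lp; do 2!split=> //.
move=> mu mu' pi pi' dmu ppi dmu' ppi'; split=> [x a _|x xp a _].
  exact: (reward_lip (x, a)).
exact: (trans_lip (x, xp, a)).
Qed.
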